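(* Let $n,r\ge 1$, ${\bf A}\in\mathbb{H}^n$, $g\in\mathcal{G}$, and ${\bf X}_0\in\mathbb{C}^{n\times r}$. Define $${\bf U}_1({\bf X})={\bf X}^{\mathrm H}{\bf A}^{(+)}{\bf X}+{\bf X}^{\mathrm H}{\bf A}^{(-)}{\bf X}_0+{\bf X}_0^{\mathrm H}{\bf A}^{(-)}{\bf X}-{\bf X}_0^{\mathrm H}{\bf A}^{(-)}{\bf X}_0,$$ $${\bf U}_2({\bf X})={\bf X}^{\mathrm H}{\bf A}^{(-)}{\bf X}+{\bf X}^{\mathrm H}{\bf A}^{(+)}{\bf X}_0+{\bf X}_0^{\mathrm H}{\bf A}^{(+)}{\bf X}-{\bf X}_0^{\mathrm H}{\bf A}^{(+)}{\bf X}_0,$$ and $u({\bf X};{\bf X}_0)=g({\bf U}_1({\bf X}))$ if $g$ is MND, $u({\bf X};{\bf X}_0)=g({\bf U}_2({\bf X}))$ if $g$ is MNI. Then: (i) $u(\cdot;{\bf X}_0)$ is convex on $\mathbb{C}^{n\times r}$ (viewed as a real vector space); (ii) $u({\bf X};{\bf X}_0)\ge g({\bf X}^{\mathrm H}{\bf A}{\bf X})$ for all ${\bf X}\in\mathbb{C}^{n\times r}$; (iii) $u({\bf X}_0;{\bf X}_0)=g({\bf X}_0^{\mathrm H}{\bf A}{\bf X}_0)$; (iv) the functions ${\bf X}\mapsto u({\bf X};{\bf X}_0)$ and ${\bf X}\mapsto g({\bf X}^{\mathrm H}{\bf A}{\bf X})$ have the same (real Fréchet) derivative at ${\bf X}={\bf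 X}_0$.
   Context: $\mathbb{H}^m$ denotes the real vector space of $m\times m$ complex Hermitian matrices, with inner product $\langle{\bf U},{\bf V}\rangle=\mathrm{tr}({\bf U}{\bf V})$; ${\bf U}\succeq{\bf V}$ means ${\bf U}-{\bf V}$ is positive semidefinite. For ${\bf A}\in\mathbb{H}^n$ with eigen-decomposition ${\bf A}=\sum_i\lambda_i{\bf u}_i{\bf u}_i^{\mathrm H}$ (orthonormal ${\bf u}_i$), ${\bf A}^{(+)}=\sum_{\lambda_i>0}\lambda_i{\bf u}_i{\bf u}_i^{\mathrm H}$ and ${\bf A}^{(-)}=\sum_{\lambda_i<0}\lambda_i{\bf u}_i{\bf u}_i^{\mathrm H}$, so ${\bf A}={\bf A}^{(+)}+{\bf A}^{(-)}$. A function $g:\mathbb{H}^r\to\mathbb{R}$ is MND (matrix nondecreasing) if ${\bf W}_1\succeq{\bf W}_2\Rightarrow g({\bf W}_1)\ge g({\bf W}_2)$, and MNI (matrix nonincreasing) if ${\bf W}_1\succeq{\bf W}_2\Rightarrow g({\bf W}_1)\le g({\bf W}_2)$. $\mathcal{G}$ is the family of differentiable convex functions $g:\mathbb{H}^r\to\mathbb{R}$ that are MND or MNI. *)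

From HB Require Import structures.
From mathcomp Require Import all_boot all_order all_algebra.
From mathcomp Require Import all_classical all_reals all_analysis.
From mathcomp Require Import complex.
Import numFieldNormedType.Exports.
Import Order.TTheory GRing.Theory Num.Theory.

Set Implicit Arguments.
Unset Strict Implicit.
Unset Printing Implicit Defensive.

Local Open Scope ring_scope.

Section Defs.
Variable R : realType.
Local Notation C := R[i].

Definition rC (t : R) : C := Complex t 0.

Definition adjH m k (X : 'M[C]_(m, k)) : 'M[C]_(k, m) := (map_mx (@conjc R) X)^T.

Definition is_herm m (M : 'M[C]_m) : Prop := adjH M = M.

Definition mx_psd m (M : 'M[C]_m) : Prop :=
  is_herm M /\ forall v : 'cV[C]_m, 0 <= (adjH v *m M *m v) 0 0.

Definition mx_ge m (W1 W2 : 'M[C]_m) : Prop := mx_psd (W1 - W2).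

(* g : H^r -> R is represented by a function on all r x r complex matrices;
   only its values on Hermitian matrices matter. *)
Definition MND r (g : 'M[C]_r -> R) : Prop :=
  forall W1 W2, is_herm W1 -> is_herm W2 -> mx_ge W1 W2 -> g W2 <= g W1.

Definition MNI r (g : 'M[C]_r -> R) : Prop :=
  forall W1 W2, is_herm W1 -> is_herm W2 -> mx_ge W1 W2 -> g W1 <= g W2.

Definition convex_on_herm r (g : 'M[C]_r -> R) : Prop :=
  forall W1 W2 (t : R), is_herm W1 -> is_herm W2 -> 0 <= t <= 1 ->
    g (rC t *: W1 + rC (1 - t) *: W2) <= t * g W1 + (1 - t) * g W2.

(* A real-linear isomorphism 'M[R]_r ~= H^r : a real matrix S is sent to the
   Hermitian matrix with real part (S + S^T)/2 and imaginary part (S - S^T)/2. *)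
Definition herm_of r (S : 'M[R]_r) : 'M[C]_r :=
  \matrix_(i, j) Complex ((S i j + S j i) / 2) ((S i j - S j i) / 2).

Definition differentiable_on_herm r (g : 'M[C]_r -> R) : Prop :=
  forall S : 'M[R]_r, differentiable (g \o (@herm_of r)) S.

Definition in_G r (g : 'M[C]_r -> R) : Prop :=
  differentiable_on_herm g /\ convex_on_herm g /\ (MND g \/ MNI g).

(* C^{n x r} as a real vector space: (Re X, Im X) |-> X *)
Definition cmx n r (p : ('M[R]_(n, r) * 'M[R]_(n, r))%type) : 'M[C]_(n, r) :=
  \matrix_(i, j) Complex (p.1 i j) (p.2 i j).

(* A^(+) and A^(-) computed from an eigendecomposition
   A = \sum_i lam_i u_i u_i^H, u_i = i-th column of the unitary U *)
Definition posPart n (U : 'M[C]_n) (lam : 'I_n -> R) : 'M[C]_n :=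
  \sum_(i < n | 0 < lam i) rC (lam i) *: (col i U *m adjH (col i U)).

Definition negPart n (U : 'M[C]_n) (lam : 'I_n -> R) : 'M[C]_n :=
  \sum_(i < n | lam i < 0) rC (lam i) *: (col i U *m adjH (col i U)).

Definition U1 n r (Ap Am : 'M[C]_n) (X0 X : 'M[C]_(n, r)) : 'M[C]_r :=
  adjH X *m Ap *m X + adjH X *m Am *m X0 + adjH X0 *m Am *m X
  - adjH X0 *m Am *m X0.

Definition U2 n r (Ap Am : 'M[C]_n) (X0 X : 'M[C]_(n, r)) : 'M[C]_r :=
  adjH X *m Am *m X + adjH X *m Ap *m X0 + adjH X0 *m Ap *m X
  - adjH X0 *m Ap *m X0.

End Defs.

From HB Require Import structures.
From mathcomp Require Import all_boot all_order all_algebra.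
From mathcomp Require Import all_classical all_reals all_analysis.
From mathcomp Require Import complex.
From mathcomp Require Import ring.
Import numFieldNormedType.Exports.
Import Order.TTheory GRing.Theory Num.Theory.
Set Implicit Arguments.
Unset Strict Implicit.
Unset Printing Implicit Defensive.
Local Open Scope ring_scope.

(* Write A = P + N with P = A^(+), N = A^(-) and abbreviate X^H M Y by
   sesq M X Y.  Two polynomial identities drive everything:
   - U1 X = X^H A X - (X - X0)^H N (X - X0)                        (U1_gap)
   - t U1 X + (1-t) U1 Y - U1 (t X + (1-t) Y)
       = t (1-t) (X - Y)^H P (X - Y)                         (U1_convex_gap)
   Since P is PSD and N is NSD, congruence makes both correction terms
   semidefinite; convexity and monotonicity of g then give (i) and (ii),
   and (iii) is the first identity at X = X0.  For MNI functions all signs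
   flip and U2 (A+) (A-) = U1 (A-) (A+), so both cases are handled at once by
   a sign parameter e = +1 / -1 (sign_monotone, semidef).
   For (iv) we pass to real coordinates (Re X, Im X): U1 becomes the real
   quadratic map of A minus the quadratic map of N centred at X0, which is
   flat at X0, so the chain rule gives equal derivatives.  This needs that
   bilinear maps on the finite-dimensional coordinate space are continuous,
   which we prove by expanding in the canonical basis. *)

Section HermitianMatrices.
Variable R : realType.
Local Notation C := R[i].

Lemma rC1 : rC 1 = 1 :> C. Proof. by []. Qed.

Lemma rCN (t : R) : rC (- t) = - rC t.
Proof. by apply/eqP; rewrite eq_complex /= oppr0 !eqxx. Qed.

Lemma rCM (a b : R) : rC (a * b) = rC a * rC b.
Proof. by apply/eqP; rewrite eq_complex /= !mulr0 !mul0r subr0 addr0 !eqxx. Qed.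

Lemma rCB (a b : R) : rC (a - b) = rC a - rC b.
Proof. by apply/eqP; rewrite eq_complex /= subr0 !eqxx. Qed.

Lemma rC_ge0 (c : R) : (0 <= rC c) = (0 <= c).
Proof. by rewrite lecE /= eqxx. Qed.

Lemma adjHD m k (X Y : 'M[C]_(m, k)) : adjH (X + Y) = adjH X + adjH Y.
Proof. by rewrite /adjH !raddfD. Qed.

Lemma adjHN m k (X : 'M[C]_(m, k)) : adjH (- X) = - adjH X.
Proof. by rewrite /adjH !raddfN. Qed.

Lemma adjHB m k (X Y : 'M[C]_(m, k)) : adjH (X - Y) = adjH X - adjH Y.
Proof. by rewrite adjHD adjHN. Qed.

Lemma adjHZ m k (t : R) (X : 'M[C]_(m, k)) : adjH (rC t *: X) = rC t *: adjH X.
Proof. by apply/matrixP => i j; rewrite !mxE /= rmorphM /= oppr0. Qed.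

Lemma adjHM m k l (X : 'M[C]_(m, k)) (Y : 'M[C]_(k, l)) :
  adjH (X *m Y) = adjH Y *m adjH X.
Proof. by rewrite /adjH map_mxM trmx_mul. Qed.

Lemma adjHK m k (X : 'M[C]_(m, k)) : adjH (adjH X) = X.
Proof. by apply/matrixP => i j; rewrite !mxE conjcK. Qed.

Lemma adjH_sum m k I (s : seq I) (P : pred I) (F : I -> 'M[C]_(m, k)) :
  adjH (\sum_(i <- s | P i) F i) = \sum_(i <- s | P i) adjH (F i).
Proof. by rewrite /adjH !raddf_sum. Qed.

Lemma herm_comb r (t : R) (W1 W2 : 'M[C]_r) :
  is_herm W1 -> is_herm W2 -> is_herm (rC t *: W1 + rC (1 - t) *: W2).
Proof. by rewrite /is_herm => h1 h2; rewrite adjHD !adjHZ h1 h2. Qed.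

Lemma hermB r (W1 W2 : 'M[C]_r) : is_herm W1 -> is_herm W2 -> is_herm (W1 - W2).
Proof. by rewrite /is_herm => h1 h2; rewrite adjHB h1 h2. Qed.

Lemma hermD r (W1 W2 : 'M[C]_r) : is_herm W1 -> is_herm W2 -> is_herm (W1 + W2).
Proof. by rewrite /is_herm => h1 h2; rewrite adjHD h1 h2. Qed.

Lemma herm_rank1_sum n (U : 'M[C]_n) (lam : 'I_n -> R) (P : pred 'I_n) :
  is_herm (\sum_(i < n | P i) rC (lam i) *: (col i U *m adjH (col i U))).
Proof.
by rewrite /is_herm adjH_sum; apply: eq_bigr => i _; rewrite adjHZ adjHM adjHK.
Qed.

Lemma spectral_split n (U : 'M[C]_n) (lam : 'I_n -> R) :
  \sum_(i < n) rC (lam i) *: (col i U *m adjH (col i U))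
  = posPart U lam + negPart U lam.
Proof.
rewrite /posPart /negPart (bigID (fun i => 0 < lam i)) /=; congr (_ + _).
rewrite (bigID (fun i => lam i < 0)) /= [X in _ + X]big1 ?addr0.
  by apply: eq_bigl => i; case: ltrgtP.
move=> i /andP[h1 h2].
have -> : lam i = 0 by apply/eqP; rewrite eq_le !leNgt h1 h2.
by rewrite /rC scale0r.
Qed.

End HermitianMatrices.

Section Sesquilinear.
Variable R : realType.
Local Notation C := R[i].

Definition sesq n r (M : 'M[C]_n) (X Y : 'M[C]_(n, r)) : 'M[C]_r := adjH X *m M *m Y.
Definition qf n (M : 'M[C]_n) (v : 'cV[C]_n) : C := sesq M v v 0 0.

Section SesqAlgebra.
Variables (n r : nat) (M N : 'M[C]_n).
Implicit Types X Y Z : 'M[C]_(n, r).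

Lemma sesqDl X Y Z : sesq M (X + Y) Z = sesq M X Z + sesq M Y Z.
Proof. by rewrite /sesq adjHD !mulmxDl. Qed.
Lemma sesqDr X Y Z : sesq M Z (X + Y) = sesq M Z X + sesq M Z Y.
Proof. by rewrite /sesq mulmxDr. Qed.
Lemma sesqBl X Y Z : sesq M (X - Y) Z = sesq M X Z - sesq M Y Z.
Proof. by rewrite /sesq adjHB !mulmxBl. Qed.
Lemma sesqBr X Y Z : sesq M Z (X - Y) = sesq M Z X - sesq M Z Y.
Proof. by rewrite /sesq mulmxBr. Qed.
Lemma sesqZl (t : R) X Z : sesq M (rC t *: X) Z = rC t *: sesq M X Z.
Proof. by rewrite /sesq adjHZ -!scalemxAl. Qed.
Lemma sesqZr (t : R) X Z : sesq M Z (rC t *: X) = rC t *: sesq M Z X.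
Proof. by rewrite /sesq -!scalemxAr. Qed.
Lemma sesqDM X Y : sesq (M + N) X Y = sesq M X Y + sesq N X Y.
Proof. by rewrite /sesq mulmxDr mulmxDl. Qed.

Lemma herm_sesq X : is_herm M -> is_herm (sesq M X X).
Proof. by move=> hM; rewrite /is_herm /sesq !adjHM adjHK mulmxA hM. Qed.

Lemma qf_sesq X (v : 'cV[C]_r) : qf (sesq M X X) v = qf M (X *m v).
Proof. by rewrite /qf /sesq adjHM !mulmxA. Qed.

End SesqAlgebra.

Lemma qfZ n (c : R) (M : 'M[C]_n) v : qf (rC c *: M) v = rC c * qf M v.
Proof. by rewrite /qf /sesq -scalemxAr -scalemxAl mxE. Qed.
Lemma qf_sum n I (s : seq I) (P : pred I) (F : I -> 'M[C]_n) v :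
  qf (\sum_(i <- s | P i) F i) v = \sum_(i <- s | P i) qf (F i) v.
Proof. by rewrite /qf /sesq mulmx_sumr mulmx_suml summxE. Qed.

Lemma qf_rank1 n (c : R) (u v : 'cV[C]_n) :
  qf (rC c *: (u *m adjH u)) v =
  rC c * (((adjH u *m v) 0 0)^*%C * (adjH u *m v) 0 0).
Proof.
rewrite qfZ; congr (_ * _).
have -> : u *m adjH u = sesq 1%:M (adjH u) (adjH u).
  by rewrite /sesq adjHK mulmx1.
rewrite qf_sesq /qf /sesq mulmx1 adjHM adjHK -{1}(adjHK u) -adjHM.
by rewrite !mxE big_ord1 !mxE.
Qed.

(* [semidef e M]: the quadratic form of M has the sign of e; e = 1 means
   positive semidefinite, e = -1 negative semidefinite. *)
Definition semidef n (e : R) (M : 'M[C]_n) : Prop := forall v, 0 <= rC e * qf M v.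

Lemma semidefM n (a e : R) (M : 'M[C]_n) : 0 <= a -> semidef e M -> semidef (a * e) M.
Proof. by move=> a0 hM v; rewrite rCM -mulrA mulr_ge0 ?rC_ge0. Qed.

Lemma semidef_rank1_sum n (e : R) (U : 'M[C]_n) (lam : 'I_n -> R) (P : pred 'I_n) :
  (forall i, P i -> 0 <= e * lam i) ->
  semidef e (\sum_(i < n | P i) rC (lam i) *: (col i U *m adjH (col i U))).
Proof.
move=> hlam v; rewrite qf_sum mulr_sumr; apply: sumr_ge0 => i Pi.
by rewrite qf_rank1 mulrA -rCM mulr_ge0 ?rC_ge0 ?hlam // mulrC mulcJ_ge0.
Qed.

Lemma semidef_posPart n (U : 'M[C]_n) lam : semidef 1 (posPart U lam).
Proof. by apply: semidef_rank1_sum => i /ltW; rewrite mul1r. Qed.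

Lemma semidef_negPart n (U : 'M[C]_n) lam : semidef (-1) (negPart U lam).
Proof. by apply: semidef_rank1_sum => i /ltW; rewrite mulN1r oppr_ge0. Qed.

Lemma psd_congr n r (c : R) (M : 'M[C]_n) (Z : 'M[C]_(n, r)) :
  is_herm M -> semidef c M -> mx_psd (rC c *: sesq M Z Z).
Proof.
move=> hM hcM; split; first by rewrite /is_herm adjHZ herm_sesq.
by move=> v; rewrite -/(qf _ v) qfZ qf_sesq.
Qed.

End Sesquilinear.

Section Surrogate.
Variable R : realType.
Local Notation C := R[i].
Variables (n r : nat) (P N : 'M[C]_n) (X0 : 'M[C]_(n, r)).
Implicit Types X Y : 'M[C]_(n, r).

(* The identities below are polynomial in the values of sesq: abstract them
   and compare entries in the commutative ring C. *)
Ltac generalize_sesq :=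
  repeat match goal with |- context[sesq ?M ?X ?Y] => generalize (sesq M X Y); intro end.

Lemma U1E X : U1 P N X0 X = sesq P X X + sesq N X X0 + sesq N X0 X - sesq N X0 X0.
Proof. by []. Qed.

Lemma U1_gap X : U1 P N X0 X = sesq (P + N) X X - sesq N (X - X0) (X - X0).
Proof.
rewrite U1E sesqDM !(sesqBl, sesqBr).
by generalize_sesq; apply/matrixP => i j; rewrite !mxE; ring.
Qed.

Lemma U1_X0 : U1 P N X0 X0 = sesq (P + N) X0 X0.
Proof. by rewrite U1_gap subrr /sesq mulmx0 subr0. Qed.

Lemma U1_convex_gap X Y (t : R) :
  rC t *: U1 P N X0 X + rC (1 - t) *: U1 P N X0 Y
  - U1 P N X0 (rC t *: X + rC (1 - t) *: Y)
  = rC (t * (1 - t)) *: sesq P (X - Y) (X - Y).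
Proof.
rewrite !U1E !(sesqBl, sesqBr, sesqDl, sesqDr, sesqZl, sesqZr) rCM rCB rC1.
by generalize_sesq; apply/matrixP => i j; rewrite !mxE; ring.
Qed.

Lemma herm_U1 X : is_herm P -> is_herm N -> is_herm (U1 P N X0 X).
Proof.
move=> hP hN; rewrite U1_gap.
by apply: hermB; apply: herm_sesq => //; apply: hermD.
Qed.

End Surrogate.

Section SurrogateProperties.
Variable R : realType.
Local Notation C := R[i].

Definition sign_monotone r (e : R) (g : 'M[C]_r -> R) : Prop :=
  forall W1 W2, is_herm W1 -> is_herm W2 -> mx_psd (rC e *: (W1 - W2)) -> g W2 <= g W1.

Lemma MND_sign_monotone r (g : 'M[C]_r -> R) : MND g -> sign_monotone 1 g.
Proof. by move=> hg W1 W2 h1 h2; rewrite rC1 scale1r; apply: hg. Qed.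

Lemma MNI_sign_monotone r (g : 'M[C]_r -> R) : MNI g -> sign_monotone (-1) g.
Proof. by move=> hg W1 W2 h1 h2; rewrite rCN rC1 scaleN1r opprB; apply: hg. Qed.

Variables (n r : nat) (g : 'M[C]_r -> R) (P N : 'M[C]_n) (X0 : 'M[C]_(n, r)) (e : R).
Hypotheses (g_convex : convex_on_herm g) (g_mono : sign_monotone e g)
  (herm_P : is_herm P) (herm_N : is_herm N)
  (P_sign : semidef e P) (N_sign : semidef (- e) N).

(* (i): the convexity defect of U1 is the e-semidefinite t(1-t) (X-Y)^H P (X-Y). *)
Lemma surrogate_convex (X Y : 'M[C]_(n, r)) (t : R) : 0 <= t <= 1 ->
  g (U1 P N X0 (rC t *: X + rC (1 - t) *: Y))
  <= t * g (U1 P N X0 X) + (1 - t) * g (U1 P N X0 Y).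
Proof.
move=> t01; have /andP[t0 t1] := t01.
have hU Z : is_herm (U1 P N X0 Z) by exact: herm_U1.
apply: le_trans (g_convex (hU X) (hU Y) t01).
apply: g_mono; [exact: herm_comb|exact: hU|].
rewrite U1_convex_gap scalerA -rCM mulrC.
by apply: psd_congr => //; apply: semidefM => //; rewrite mulr_ge0 ?subr_ge0.
Qed.

(* (ii): U1 exceeds X^H (P + N) X by the e-semidefinite -(X-X0)^H N (X-X0). *)
Lemma surrogate_majorizes (X : 'M[C]_(n, r)) :
  g (sesq (P + N) X X) <= g (U1 P N X0 X).
Proof.
apply: g_mono; [exact: herm_U1|exact/herm_sesq/hermD|].
rewrite U1_gap addrAC subrr add0r scalerN -scaleNr -rCN.
exact: psd_congr.
Qed.

End SurrogateProperties.

Section FiniteDimensionalContinuity.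
Variables (R : realType) (n r : nat).
Local Notation Pt := ('M[R]_(n, r) * 'M[R]_(n, r))%type.

Lemma pt_expand (p : Pt) : p = \sum_(ij : 'I_n * 'I_r)
  (p.1 ij.1 ij.2 *: (delta_mx ij.1 ij.2, 0) + p.2 ij.1 ij.2 *: (0, delta_mx ij.1 ij.2)).
Proof.
have sum_fst (F : 'I_n * 'I_r -> Pt) : (\sum_ij F ij).1 = \sum_ij (F ij).1.
  exact: (big_morph fst).
have sum_snd (F : 'I_n * 'I_r -> Pt) : (\sum_ij F ij).2 = \sum_ij (F ij).2.
  exact: (big_morph snd).
case: p => P Q; rewrite [RHS]surjective_pairing sum_fst sum_snd /=; congr (_, _).
  rewrite [LHS]matrix_sum_delta pair_bigA /=.
  by apply: eq_bigr => -[i j] _ /=; rewrite scaler0 addr0.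
rewrite [LHS]matrix_sum_delta pair_bigA /=.
by apply: eq_bigr => -[i j] _ /=; rewrite scaler0 add0r.
Qed.

Lemma continuous_fst_coord i j : continuous (fun p : Pt => p.1 i j).
Proof.
move=> p; apply: (@continuous_comp _ _ _ fst (fun M : 'M[R]_(n, r) => M i j)).
  exact: cvg_fst.
exact: coord_continuous.
Qed.

Lemma continuous_snd_coord i j : continuous (fun p : Pt => p.2 i j).
Proof.
move=> p; apply: (@continuous_comp _ _ _ snd (fun M : 'M[R]_(n, r) => M i j)).
  exact: cvg_snd.
exact: coord_continuous.
Qed.

Lemma continuous_sum {T : topologicalType} {W : normedModType R} (I : finType)
    (F : I -> T -> W) x :
  (forall i, {for x, continuous (F i)}) -> {for x, continuous (fun y => \sum_i F i y)}.
Proof.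
move=> hF; rewrite (_ : (fun y => _) = \sum_i F i); last first.
  by apply/funext => y; rewrite fct_sumE.
by elim/big_ind: _ => //; [exact: cvg_cst|move=> f g; exact: continuousD].
Qed.

Variable W : normedModType R.

Lemma linear_continuous_pt (L : {linear Pt -> W}) : continuous L.
Proof.
have -> : (L : Pt -> W) = fun p => \sum_(ij : 'I_n * 'I_r)
    (p.1 ij.1 ij.2 *: L (delta_mx ij.1 ij.2, 0) + p.2 ij.1 ij.2 *: L (0, delta_mx ij.1 ij.2)).
  apply/funext => p; rewrite {1}(pt_expand p) linear_sum.
  by apply: eq_bigr => ij _; rewrite linearD !linearZ.
move=> p; apply: continuous_sum => ij; apply: continuousD; apply: continuousZr_tmp.
  exact: continuous_fst_coord.
exact: continuous_snd_coord.
Qed.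

Lemma bilinear_continuous_pt (B : {bilinear Pt -> Pt -> W}) :
  continuous (fun pq : Pt * Pt => B pq.1 pq.2).
Proof.
have -> : (fun pq : Pt * Pt => B pq.1 pq.2) = fun pq => \sum_(ij : 'I_n * 'I_r)
    (pq.1.1 ij.1 ij.2 *: B (delta_mx ij.1 ij.2, 0) pq.2
     + pq.1.2 ij.1 ij.2 *: B (0, delta_mx ij.1 ij.2) pq.2).
  apply/funext => pq; rewrite {1}(pt_expand pq.1) linear_sumlz.
  by apply: eq_bigr => ij _; rewrite linearDl !linearZl_LR.
move=> x; apply: continuous_sum => ij.
have contB k : continuous (fun pq : Pt * Pt => B k pq.2).
  move=> y; apply: (@continuous_comp _ _ _ snd (B k)); first exact: cvg_snd.
  exact: linear_continuous_pt.
apply: continuousD; apply: continuousZ; try exact: contB.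
  apply: (@continuous_comp _ _ _ fst (fun p : Pt => p.1 ij.1 ij.2)).
    exact: cvg_fst.
  exact: continuous_fst_coord.
apply: (@continuous_comp _ _ _ fst (fun p : Pt => p.2 ij.1 ij.2)).
  exact: cvg_fst.
exact: continuous_snd_coord.
Qed.

End FiniteDimensionalContinuity.

Section QuadraticMaps.
Variables (R : realType) (U W : normedModType R) (B : {bilinear U -> U -> W}).
Hypothesis B_continuous : continuous (fun pq : U * U => B pq.1 pq.2).

Lemma diag_linear : linear (fun x : U => (x, x)). Proof. by []. Qed.

Lemma quadratic_differentiable p :
  differentiable (fun x => B x x) p /\
  'd (fun x => B x x) p = (fun h => B p h + B h p) :> (U -> W).
Proof.
pose diag : {linear U -> (U * U)%type} := HB.pack (fun x : U => (x, x))
  (GRing.isLinear.Build _ _ _ _ _ diag_linear).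
have diag_continuous : continuous diag by move=> x; apply: cvg_pair; exact: cvg_id.
have -> : (fun x => B x x) = (fun pq : U * U => B pq.1 pq.2) \o diag by [].
have d_diag : differentiable diag p by exact: linear_differentiable.
have d_B : differentiable (fun pq : U * U => B pq.1 pq.2) (diag p).
  exact: differentiable_bilin.
split; first exact: differentiable_comp.
by rewrite diff_comp // diff_bilin // diff_lin //; exact: diag_continuous.
Qed.

Lemma centred_quadratic_flat p0 :
  differentiable (fun p => B (p - p0) (p - p0)) p0 /\
  ('d (fun p => B (p - p0) (p - p0)) p0 : U -> W) = 0.
Proof.
have d_shift : differentiable (fun p : U => p - p0) p0.
  by apply: differentiableB; [exact: ex_diff|exact: differentiable_cst].
have [dQ dQE] := quadratic_differentiable (p0 - p0).
have -> : (fun p => B (p - p0) (p - p0)) = (fun x => B x x) \o (fun p => p - p0) by [].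
split; first exact: differentiable_comp.
rewrite (diff_comp d_shift dQ) dQE subrr.
by apply/funext => h /=; rewrite linear0l linear0r addr0.
Qed.

End QuadraticMaps.

Lemma diff_comp_flat_perturbation (R : realType) (U V W : normedModType R)
    (h : V -> W) (F K : U -> V) p0 :
  differentiable F p0 -> differentiable K p0 -> ('d K p0 : U -> V) = 0 -> K p0 = 0 ->
  differentiable h (F p0) ->
  [/\ differentiable (h \o (F - K)) p0, differentiable (h \o F) p0
    & ('d (h \o (F - K)) p0 : U -> W) = 'd (h \o F) p0].
Proof.
move=> dF dK dK0 K0 dh.
have dFK : differentiable (F - K) p0 by exact: differentiableB.
have FK0 : (F - K) p0 = F p0 by rewrite -[LHS]/(F p0 - K p0) K0 subr0.
have dh' : differentiable h ((F - K) p0) by rewrite FK0.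
split; [exact: differentiable_comp|exact: differentiable_comp|].
rewrite (diff_comp dFK dh') (diff_comp dF dh) (diffB dF dK) FK0 dK0.
by apply/funext => v /=; rewrite subr0.
Qed.

Section RealCoordinates.
Variable R : realType.
Local Notation C := R[i].

Definition herm_coord r (M : 'M[C]_r) : 'M[R]_r :=
  map_mx (fun z : C => complex.Re z + complex.Im z) M.

Lemma herm_coordK r (M : 'M[C]_r) : is_herm M -> herm_of (herm_coord M) = M.
Proof.
move=> hM; apply/matrixP => i j; rewrite !mxE.
have -> : M j i = conjc (M i j) by rewrite -{1}hM !mxE.
by case: (M i j) => a b /=; congr Complex; field.
Qed.

Lemma herm_coordP r (a : R) (M N : 'M[C]_r) :
  herm_coord (rC a *: M + N) = a *: herm_coord M + herm_coord N.
Proof.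
apply/matrixP => i j; rewrite !mxE /=.
by case: (M i j) => x y; case: (N i j) => z w /=; ring.
Qed.

Lemma herm_coordB r (M N : 'M[C]_r) : herm_coord (M - N) = herm_coord M - herm_coord N.
Proof.
apply/matrixP => i j; rewrite !mxE /=.
by case: (M i j) => x y; case: (N i j) => z w /=; ring.
Qed.

Variables (n r : nat).
Local Notation Pt := ('M[R]_(n, r) * 'M[R]_(n, r))%type.

Lemma cmxP (a : R) (p q : Pt) : cmx (a *: p + q) = rC a *: cmx p + cmx q.
Proof.
apply/matrixP => i j; rewrite !mxE /=.
by apply/eqP; rewrite eq_complex /= !mul0r subr0 addr0 !eqxx.
Qed.

Lemma cmxB (p q : Pt) : cmx (p - q) = cmx p - cmx q.
Proof. by apply/matrixP => i j; rewrite !mxE. Qed.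

Definition real_sesq (M : 'M[C]_n) (p q : Pt) : 'M[R]_r :=
  herm_coord (sesq M (cmx p) (cmx q)).

Lemma real_sesq_is_bilinear (M : 'M[C]_n) :
  bilinear_for (GRing.Scale.Law.clone _ _ *:%R _) (GRing.Scale.Law.clone _ _ *:%R _)
    (real_sesq M).
Proof.
split=> [z|z] a p q /=.
  by rewrite /real_sesq cmxP sesqDl sesqZl herm_coordP.
by rewrite /real_sesq cmxP sesqDr sesqZr herm_coordP.
Qed.

HB.instance Definition _ (M : 'M[C]_n) :=
  bilinear_isBilinear.Build R Pt Pt 'M[R]_r _ _ (real_sesq M) (real_sesq_is_bilinear M).

End RealCoordinates.

Section Tangency.
Variables (R : realType) (n r : nat) (P N : 'M[R[i]]_n) (X0 : 'M[R[i]]_(n, r)).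
Local Notation Pt := ('M[R]_(n, r) * 'M[R]_(n, r))%type.
Variable p0 : Pt.
Hypotheses (herm_P : is_herm P) (herm_N : is_herm N) (p0_X0 : cmx p0 = X0).

Lemma U1_coords (p : Pt) : U1 P N X0 (cmx p) =
  herm_of (real_sesq (P + N) p p - real_sesq N (p - p0) (p - p0)).
Proof.
rewrite -[LHS]herm_coordK; last exact: herm_U1.
by rewrite U1_gap herm_coordB -p0_X0 -cmxB.
Qed.

Lemma sesq_coords (p : Pt) : sesq (P + N) (cmx p) (cmx p) = herm_of (real_sesq (P + N) p p).
Proof. by rewrite herm_coordK //; apply/herm_sesq/hermD. Qed.

Lemma surrogate_tangent (g : 'M[R[i]]_r -> R) : differentiable_on_herm g ->
  [/\ differentiable (fun p => g (U1 P N X0 (cmx p))) p0,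
      differentiable (fun p => g (sesq (P + N) (cmx p) (cmx p))) p0
    & ('d (fun p => g (U1 P N X0 (cmx p))) p0 : Pt -> R)
      = 'd (fun p => g (sesq (P + N) (cmx p) (cmx p))) p0].
Proof.
move=> dg; have B_cont (M : 'M[R[i]]_n) := bilinear_continuous_pt (B := real_sesq (r := r) M).
have [dQ _] := quadratic_differentiable (B_cont (P + N)) p0.
have [dK dK0] := centred_quadratic_flat (B_cont N) p0.
have -> : (fun p => g (U1 P N X0 (cmx p))) = (g \o @herm_of R r) \o
    ((fun p => real_sesq (P + N) p p) - (fun p => real_sesq N (p - p0) (p - p0))).
  by apply/funext => p; rewrite /= U1_coords.
have -> : (fun p => g (sesq (P + N) (cmx p) (cmx p))) =
    (g \o @herm_of R r) \o (fun p => real_sesq (P + N) p p).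
  by apply/funext => p; rewrite /= sesq_coords.
by apply: diff_comp_flat_perturbation => //; rewrite subrr linear0l.
Qed.

End Tangency.

Lemma surrogate_properties (R : realType) (n r : nat) (g : 'M[R[i]]_r -> R)
    (e : R) (P N : 'M[R[i]]_n) (X0 : 'M[R[i]]_(n, r)) (u : 'M[R[i]]_(n, r) -> R) :
  in_G g -> sign_monotone e g -> is_herm P -> is_herm N ->
  semidef e P -> semidef (- e) N -> (forall X, u X = g (U1 P N X0 X)) ->
  (forall (X Y : 'M[R[i]]_(n, r)) (t : R), 0 <= t <= 1 ->
     u (rC t *: X + rC (1 - t) *: Y) <= t * u X + (1 - t) * u Y)
  /\ (forall X : 'M[R[i]]_(n, r), g (adjH X *m (P + N) *m X) <= u X)
  /\ u X0 = g (adjH X0 *m (P + N) *m X0)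
  /\ (forall p0 : ('M[R]_(n, r) * 'M[R]_(n, r))%type, cmx p0 = X0 ->
        differentiable (u \o (@cmx R n r)) p0
        /\ differentiable (fun p => g (adjH (cmx p) *m (P + N) *m cmx p)) p0
        /\ ('d (u \o (@cmx R n r)) p0 : _ -> R)
           = 'd (fun p => g (adjH (cmx p) *m (P + N) *m cmx p)) p0).
Proof.
move=> [dg [g_convex _]] g_mono hP hN P_sign N_sign hu.
have u_cmx : u \o @cmx R n r = fun p => g (U1 P N X0 (cmx p)).
  by apply/funext => p; rewrite /= hu.
split; first by move=> X Y t t01; rewrite !hu; exact: (surrogate_convex X0 g_convex g_mono).
split; first by move=> X; rewrite hu; exact: (surrogate_majorizes X0 g_mono).
split; first by rewrite hu U1_X0.
move=> p0 p0_X0; rewrite u_cmx.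
by have [] := surrogate_tangent hP hN p0_X0 dg.
Qed.

Theorem theorem2 (R : realType) (n r : nat) (hn : (0 < n)%N) (hr : (0 < r)%N)
  (A U : 'M[R[i]]_n) (lam : 'I_n -> R)
  (hAherm : is_herm A)
  (hU : adjH U *m U = 1%:M)
  (hA : A = \sum_(i < n) rC (lam i) *: (col i U *m adjH (col i U)))
  (g : 'M[R[i]]_r -> R) (hg : in_G g)
  (X0 : 'M[R[i]]_(n, r)) (u : 'M[R[i]]_(n, r) -> R)
  (hu : (MND g /\ forall X, u X = g (U1 (posPart U lam) (negPart U lam) X0 X))
     \/ (MNI g /\ forall X, u X = g (U2 (posPart U lam) (negPart U lam) X0 X))) :
  (* (i) convexity over the real vector space C^{n x r} *)
  (forall (X Y : 'M[R[i]]_(n, r)) (t : R), 0 <= t <= 1 ->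
     u (rC t *: X + rC (1 - t) *: Y) <= t * u X + (1 - t) * u Y)
  (* (ii) majorization *)
  /\ (forall X : 'M[R[i]]_(n, r), g (adjH X *m A *m X) <= u X)
  (* (iii) tightness at X0 *)
  /\ u X0 = g (adjH X0 *m A *m X0)
  (* (iv) same real Frechet derivative at X0 *)
  /\ (forall p0 : ('M[R]_(n, r) * 'M[R]_(n, r))%type, cmx p0 = X0 ->
        differentiable (u \o (@cmx R n r)) p0
        /\ differentiable (fun p => g (adjH (cmx p) *m A *m cmx p)) p0
        /\ ('d (u \o (@cmx R n r)) p0 : _ -> R)
           = 'd (fun p => g (adjH (cmx p) *m A *m cmx p)) p0).

Proof.
rewrite hA spectral_split.
case: hu => [[g_MND hu] | [g_MNI hu]].
  apply: surrogate_properties hu => //.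
  - exact: MND_sign_monotone.
  - exact: herm_rank1_sum.
  - exact: herm_rank1_sum.
  - exact: semidef_posPart.
  - exact: semidef_negPart.
(* U2 (A+) (A-) is U1 (A-) (A+): the roles of the two parts are exchanged. *)
rewrite addrC; apply: surrogate_properties hu => //.
- exact: MNI_sign_monotone.
- exact: herm_rank1_sum.
- exact: herm_rank1_sum.
- exact: semidef_negPart.
- by rewrite opprK; exact: semidef_posPart.
Qed.
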